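(* Let $\mathcal{A}$ be a central and essential arrangement in $\mathbb{Q}^l$ as in the context, let $\sigma$ be a term ordering, $p$ a prime, and $1\le i<j\le n$. If $(\alpha_i)_p=\beta(\alpha_j)_p$ for some $\beta\in\mathbb{F}_p\setminus\{0\}$, then $p$ is not $\sigma$-lucky for the ideal $\langle\alpha_i,\alpha_j\rangle\subseteq\mathbb{Z}[x_1,\dots,x_l]$.
   Context: $\mathcal{A}=\{H_1,\dots,H_n\}$: $n$ distinct linear hyperplanes in $\mathbb{Q}^l$ with $\bigcap H_i=\{0\}$, $H_i=\{\alpha_i=0\}$, $\alpha_i\in\mathbb{Z}[x_1,\dots,x_l]$ a nonzero linear form whose coefficients are not all divisible by any prime (so $\alpha_i,\alpha_j$ are not scalar multiples of one another for $i\ne j$). $(\alpha_i)_p$ is the reduction of $\alpha_i$ mod $p$. For a term ordering $\sigma$ and nonzero $f\in\mathbb{Z}[x_1,\dots,x_l]$, $\mathrm{LT}_\sigma(f)$ is the $\sigma$-largest term, $\mathrm{LC}_\sigma(f)$ its coefficient, $\mathrm{LM}_\sigma(f)=\mathrm{LC}_\sigma(f)\mathrm{LT}_\sigma(f)$. A minimal strong $\sigma$-Gröbner basis of an ideal $I\subseteq\mathbb{Z}[x_1,\dots,x_l]$ is a finite generating set $G$ of nonzero elements of $I$ such that every nonzero $f\in I$ has $\mathrm{LM}_\sigma(f)$ divisible by some $\mathrm{LM}_\sigma(g)$, $g\in G$, and no $\mathrm{LM}_\sigma(g)$ divides $\mathrm{LM}_\sigma(g')$ for distinct $g,g'\in G$;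 the set of leading coefficients is independent of the choice. $p$ is $\sigma$-lucky for $I$ if $p$ divides none of these leading coefficients. *)

From HB Require Import structures.
From mathcomp Require Import all_boot all_order all_algebra.
From mathcomp Require Import mpoly.
Set Implicit Arguments.
Unset Strict Implicit.
Unset Printing Implicit Defensive.
Import Order.TTheory GRing.Theory Num.Theory.
Local Open Scope ring_scope.

Record termOrder (l : nat) := TermOrder {
  tord : rel 'X_{1..l};
  tord_refl : reflexive tord;
  tord_anti : antisymmetric tord;
  tord_trans : transitive tord;
  tord_total : total tord;
  tord_mul : forall m1 m2 m, tord m1 m2 -> tord (m1 + m)%MM (m2 + m)%MM;
  tord_ge0 : forall m, tord 0%MM m }.

Section GB.
Variables (l : nat) (sigma : termOrder l).

(* exponent of the sigma-largest term LT_sigma(f) (for f != 0) *)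
Definition LTexp (f : {mpoly int[l]}) : 'X_{1..l} :=
  foldr (fun m acc => if tord sigma acc m then m else acc) 0%MM (msupp f).

Definition LC (f : {mpoly int[l]}) : int := f@_(LTexp f).

Definition LM_dvd (g f : {mpoly int[l]}) : bool :=
  (LTexp g <= LTexp f)%MM && (LC g %| LC f)%Z.

Definition in_ideal (gs : seq {mpoly int[l]}) (f : {mpoly int[l]}) : Prop :=
  exists c : 'I_(size gs) -> {mpoly int[l]},
    f = \sum_(k < size gs) c k * gs`_k.

Definition min_strong_GB (I : {mpoly int[l]} -> Prop) (G : seq {mpoly int[l]})
  : Prop :=
  [/\ (forall g, g \in G -> g != 0 /\ I g),
      (forall f, I f -> in_ideal G f),
      (forall f, I f -> f != 0 -> exists2 g, g \in G & LM_dvd g f)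
    & (forall g g', g \in G -> g' \in G -> g != g' -> ~~ LM_dvd g g')].

(* p is sigma-lucky for I: p divides none of the leading coefficients of a
   minimal strong sigma-Groebner basis of I (these are independent of the
   choice of basis). *)
Definition lucky (p : nat) (I : {mpoly int[l]} -> Prop) : Prop :=
  exists G, min_strong_GB I G /\ forall g, g \in G -> ~~ (p%:Z %| LC g)%Z.

End GB.

(* Standing assumptions on the arrangement A = {H_1,...,H_n}, H_i = {alpha_i = 0}
   in Q^l: alpha_i nonzero integral linear forms with coprime coefficients,
   pairwise not scalar multiples (distinct hyperplanes), and
   \bigcap H_i = {0} (central and essential). *)
Definition lin_form (l : nat) (a : {mpoly int[l]}) : Prop :=
  forall m, m \in msupp a -> mdeg m = 1%N.

Definition arrangement (l n : nat) (alpha : 'I_n -> {mpoly int[l]}) : Prop :=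
  [/\ (forall i, alpha i != 0 /\ lin_form (alpha i)),
      (forall i q, prime q -> ~ (forall m, (q%:Z %| (alpha i)@_m)%Z)),
      (forall i j, i != j -> forall c d : int,
          c *: alpha i = d *: alpha j -> c = 0 /\ d = 0)
    & (forall x : 'I_l -> rat,
          (forall i, (map_mpoly (fun z : int => z%:~R : rat) (alpha i)).@[x] = 0) ->
          forall k, x k = 0)].

Definition redp (p l : nat) (f : {mpoly int[l]}) : {mpoly 'F_p[l]} :=
  map_mpoly (fun z : int => z%:~R : 'F_p) f.

From HB Require Import structures.
From mathcomp Require Import all_boot all_order all_algebra.
From mathcomp Require Import mpoly zify.
Set Implicit Arguments.
Unset Strict Implicit.
Unset Printing Implicit Defensive.
Import GRing.Theory.
Local Open Scope ring_scope.

(* Since (alpha_i)_p = beta (alpha_j)_p, we can write alpha_i - c alpha_j = p h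
   with c an integer lift of beta and h a linear form.  The linear forms of
   I = <alpha_i, alpha_j> are exactly the lattice Z alpha_i + Z alpha_j.  If a
   minimal strong Groebner basis of I had no leading coefficient divisible by
   p, this lattice would be p-saturated: the leading monomial of p h is
   divisible by LM(g) for some basis element g, and since p is prime to LC(g),
   the linear part of g cancels the leading term of h inside the lattice;
   descending on the leading term puts h in the lattice.  Writing h = x alpha_i
   + y alpha_j then gives (1 - p x) alpha_i = (c + p y) alpha_j, and as the two
   forms are not proportional, p divides 1. *)

Section LinearForms.
Context {l : nat}.
Implicit Types (a b c f g h : {mpoly int[l]}).

Lemma mpolyZ_eq0 (x : int) f : x != 0 -> (x *: f == 0) = (f == 0).
Proof. by move=> x0; rewrite -!msupp_eq0 -!size_eq0 (perm_size (msuppZ f x0)). Qed.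

Lemma lin_form_coeff0 a : lin_form a -> a@_0%MM = 0.
Proof.
move=> la; apply/eqP; apply: contraT; rewrite -mcoeff_msupp => /la.
by rewrite mdeg0.
Qed.

Lemma lin_formD f g : lin_form f -> lin_form g -> lin_form (f + g).
Proof. by move=> lf lg m /msuppD_le; rewrite mem_cat => /orP[/lf|/lg]. Qed.

Lemma lin_formZ (x : int) f : lin_form f -> lin_form (x *: f).
Proof. by move=> lf m /msuppZ_le /lf. Qed.

Lemma lin_formZK (x : int) f : x != 0 -> lin_form (x *: f) -> lin_form f.
Proof. by move=> x0 lxf m; rewrite -(perm_mem (msuppZ f x0)) => /lxf. Qed.

Lemma lepm_mdeg_le1 (m t : 'X_{1..l}) :
  (m <= t)%MM -> (mdeg t <= 1)%N -> m = 0%MM \/ m = t.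
Proof.
move=> le_mt; rewrite -(submK le_mt) mdegD.
case E: (mdeg (t - m)) => [|k] dt.
  by right; move/eqP: E; rewrite mdeg_eq0 => /eqP ->; rewrite add0m.
by left; apply/eqP; rewrite -mdeg_eq0; apply/eqP; lia.
Qed.

Lemma mcoeffMX_mdeg_le1 c (m t : 'X_{1..l}) :
  mdeg m = 1%N -> (mdeg t <= 1)%N -> (c * 'X_[m])@_t = c@_0%MM * (m == t)%:R.
Proof.
move=> dm dt; have [le_mt|] := boolP (m <= t)%MM.
  case: (lepm_mdeg_le1 le_mt dt) => [m0|<-]; first by move: dm; rewrite m0 mdeg0.
  by rewrite -{1}(addm0 m) mcoeffMX eqxx mulr1.
have [->|_ not_le_mt] := eqVneq m t; first by rewrite lepm_refl.
rewrite mulr0; apply/eqP; apply: contraNT not_le_mt.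
rewrite -mcoeff_msupp (perm_mem (msuppMX c m)) => /mapP [m' _ ->].
by apply/mnm_lepP => k; rewrite mnmDE leq_addr.
Qed.

Lemma mcoeffM_lin_form c a (t : 'X_{1..l}) :
  lin_form a -> (mdeg t <= 1)%N -> (c * a)@_t = c@_0%MM * a@_t.
Proof.
move=> la dt; rewrite {1}(mpolyE a) big_distrr raddf_sum [in RHS](mpolyE a).
rewrite raddf_sum big_distrr; apply: eq_big_seq => m ms /=.
rewrite -scalerAr !mcoeffZ (mcoeffMX_mdeg_le1 _ (la _ ms) dt) mcoeffX.
by rewrite mulrCA.
Qed.

Definition in_zspan a b f : Prop := exists x y : int, f = x *: a + y *: b.

Lemma in_zspanD a b f g : in_zspan a b f -> in_zspan a b g -> in_zspan a b (f + g).
Proof.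
move=> [x [y ->]] [x' [y' ->]]; exists (x + x'), (y + y').
by rewrite !scalerDl addrACA.
Qed.

Lemma in_zspanZ a b (z : int) f : in_zspan a b f -> in_zspan a b (z *: f).
Proof. by move=> [x [y ->]]; exists (z * x), (z * y); rewrite scalerDr !scalerA. Qed.

Lemma in_zspan_lin_form a b f :
  lin_form a -> lin_form b -> in_zspan a b f -> lin_form f.
Proof. by move=> la lb [x [y ->]]; apply: lin_formD; apply: lin_formZ. Qed.

Lemma in_zspan_ideal a b f : in_zspan a b f -> in_ideal [:: a; b] f.
Proof.
move=> [x [y ->]]; exists (fun k => if val k == 0%N then x%:MP else y%:MP).
by rewrite /= big_ord_recl big_ord_recl big_ord0 addr0 /= !mul_mpolyC.
Qed.

Lemma in_ideal_linear_part a b f :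
  lin_form a -> lin_form b -> in_ideal [:: a; b] f ->
  exists2 ell, in_zspan a b ell & forall t, (mdeg t <= 1)%N -> f@_t = ell@_t.
Proof.
move=> la lb [c ->]; rewrite /= big_ord_recl big_ord_recl big_ord0 addr0 /=.
exists ((c ord0)@_0%MM *: a + (c (lift ord0 ord0))@_0%MM *: b); first by do 2!eexists.
by move=> t dt; rewrite !mcoeffD !mcoeffM_lin_form // !mcoeffZ.
Qed.

End LinearForms.

Section LeadingTerms.
Context {l : nat} (sigma : termOrder l).
Implicit Types (f : {mpoly int[l]}).

Let tmax := fun m acc => if tord sigma acc m then m else acc.

Lemma foldr_tmax_spec (s : seq 'X_{1..l}) :
  (foldr tmax 0%MM s = 0%MM \/ foldr tmax 0%MM s \in s) /\
  {in s, forall m, tord sigma m (foldr tmax 0%MM s)}.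
Proof.
elim: s => [|x s [IHr IHm]] /=; first by split; [left|].
rewrite /tmax; case: ifP => le_r_x.
  split=> [|m]; first by right; rewrite mem_head.
  by rewrite inE => /predU1P[->|/IHm le_m_r]; [exact: tord_refl | exact: tord_trans le_r_x].
split=> [|m]; first by case: IHr => [->|r_s]; [left | right; rewrite inE r_s orbT].
rewrite inE => /predU1P[->|/IHm //].
by case/orP: (tord_total sigma (foldr tmax 0%MM s) x); rewrite ?le_r_x.
Qed.

Lemma LTexp_max f m : m \in msupp f -> tord sigma m (LTexp sigma f).
Proof. exact: (foldr_tmax_spec (msupp f)).2. Qed.

Lemma LTexp_msupp f : f != 0 -> LTexp sigma f \in msupp f.
Proof.
move=> f0; have [[LT0|//] LTmax] := foldr_tmax_spec (msupp f).
rewrite /LTexp -/tmax LT0; case E: (msupp f) => [|m s].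
  by move/eqP: E; rewrite msupp_eq0 (negPf f0).
have ms : m \in msupp f by rewrite E mem_head.
have le_m0 := LTmax _ ms; rewrite LT0 in le_m0.
by rewrite -[0%MM](@tord_anti _ sigma m) ?mem_head // le_m0 tord_ge0.
Qed.

Lemma LTexpE f m : m \in msupp f ->
  (forall m', m' \in msupp f -> tord sigma m' m) -> LTexp sigma f = m.
Proof.
move=> mf le_f_m; have f0 : f != 0 by apply: contraTneq mf => ->; rewrite msupp0.
by apply: (@tord_anti _ sigma); rewrite le_f_m ?LTexp_max ?LTexp_msupp.
Qed.

Lemma LTexpZ (x : int) f : x != 0 -> LTexp sigma (x *: f) = LTexp sigma f.
Proof.
move=> x0; have [->|f0] := eqVneq f 0; first by rewrite scaler0.
have supp_xf := perm_mem (msuppZ f x0).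
by apply: LTexpE => [|m']; rewrite supp_xf ?LTexp_msupp //; apply: LTexp_max.
Qed.

Lemma LCZ (x : int) f : x != 0 -> LC sigma (x *: f) = x * LC sigma f.
Proof. by move=> x0; rewrite /LC LTexpZ // mcoeffZ. Qed.

Definition vars_below (m : 'X_{1..l}) := #|[pred k : 'I_l | tord sigma U_(k)%MM m]|.

Lemma vars_below_lt (m : 'X_{1..l}) k :
  tord sigma m U_(k)%MM -> m != U_(k)%MM -> (vars_below m < vars_below U_(k))%N.
Proof.
move=> le_m_k neq_m_k; apply: proper_card; apply/properP; split.
  by apply/subsetP => j; rewrite !inE => /tord_trans; apply.
exists k; rewrite !inE ?tord_refl //; apply: contra neq_m_k => le_k_m.
by apply/eqP; apply: (@tord_anti _ sigma); rewrite le_m_k.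
Qed.

End LeadingTerms.

Section Saturation.
Variables (l : nat) (sigma : termOrder l) (p : nat) (a b : {mpoly int[l]}).
Variable G : seq {mpoly int[l]}.
Hypotheses (p_prime : prime p) (la : lin_form a) (lb : lin_form b).
Hypothesis GB : min_strong_GB sigma (in_ideal [:: a; b]) G.
Hypothesis G_lucky : forall g, g \in G -> ~~ (p%:Z %| LC sigma g)%Z.

Let p_neq0 : p%:Z != 0. Proof. by rewrite eqz_nat -lt0n prime_gt0. Qed.

Lemma zspan_leading_reducer h :
  lin_form h -> h != 0 -> in_zspan a b (p%:Z *: h) ->
  exists2 ell, in_zspan a b ell &
    LTexp sigma ell = LTexp sigma h /\ (LC sigma ell %| LC sigma h)%Z.
Proof.
move=> lh h0 ph_span; have [GB_sub _ GB_dvd _] := GB.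
have /mdeg1P [k /eqP LTh] : mdeg (LTexp sigma h) == 1%N by rewrite lh ?LTexp_msupp.
have ph0 : p%:Z *: h != 0 by rewrite mpolyZ_eq0.
have [g gG /andP [le_LTg dvd_LCg]] := GB_dvd _ (in_zspan_ideal ph_span) ph0.
have [g0 Ig] := GB_sub g gG.
have [ell ell_span g_ell] := in_ideal_linear_part la lb Ig.
have lell := in_zspan_lin_form la lb ell_span.
have dk : (mdeg (U_(k)%MM : 'X_{1..l}) <= 1)%N by rewrite mdeg1.
(* LT(g) divides the variable LT(h) and cannot be 1, as g has no constant term. *)
have LTg : LTexp sigma g = U_(k)%MM.
  rewrite LTexpZ // LTh in le_LTg.
  have [LTg0|//] := lepm_mdeg_le1 le_LTg dk.
  have := LTexp_msupp sigma g0.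
  by rewrite LTg0 mcoeff_msupp g_ell ?mdeg0 // lin_form_coeff0 ?eqxx.
have LCg : LC sigma g = ell@_(U_(k)%MM) by rewrite /LC LTg g_ell.
have LTell : LTexp sigma ell = LTexp sigma h.
  rewrite LTh; apply: LTexpE => [|m ell_m].
    by rewrite mcoeff_msupp -LCg -mcoeff_msupp LTexp_msupp.
  rewrite -LTg; apply: LTexp_max.
  by rewrite mcoeff_msupp g_ell ?lell // -mcoeff_msupp.
have LCell : LC sigma ell = LC sigma g by rewrite LCg /LC LTell LTh.
have coprime_LCg : coprimez (LC sigma g) p%:Z.
  by rewrite coprimezE coprime_sym prime_coprime // -dvdzE G_lucky.
exists ell => //; split=> //.
by rewrite LCell -(Gauss_dvdzr _ coprime_LCg) -LCZ.
Qed.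

Lemma zspan_saturated h : lin_form h -> in_zspan a b (p%:Z *: h) -> in_zspan a b h.
Proof.
move=> lh; have [N] := ubnP (vars_below sigma (LTexp sigma h)).
elim: N h lh => [//|N IH] h lh below_h ph_span.
have [->|h0] := eqVneq h 0; first by exists 0, 0; rewrite !scale0r addr0.
have [ell ell_span [LTell dvd_LC]] := zspan_leading_reducer lh h0 ph_span.
set q := (LC sigma h %/ LC sigma ell)%Z.
set h' := h - q *: ell.
have h_split : h = h' + q *: ell by rewrite subrK.
suff h'_span : in_zspan a b h' by rewrite h_split; apply: in_zspanD; last apply: in_zspanZ.
have lh' : lin_form h'.
  by rewrite /h' -scaleNr; apply: lin_formD; last apply/lin_formZ/(in_zspan_lin_form la lb).
have [->|h'0] := eqVneq h' 0; first by exists 0, 0; rewrite !scale0r addr0.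
have /mdeg1P [k /eqP LTh] : mdeg (LTexp sigma h) == 1%N by rewrite lh ?LTexp_msupp.
have h'_below m : m \in msupp h' -> tord sigma m U_(k)%MM.
  rewrite -LTh => /msuppB_le; rewrite mem_cat => /orP[/LTexp_max //|/msuppZ_le].
  by rewrite -LTell => /LTexp_max.
apply: IH => //.
- apply: leq_trans (vars_below_lt (h'_below _ (LTexp_msupp sigma h'0)) _) _.
    apply: contraTneq (LTexp_msupp sigma h'0) => ->.
    rewrite mcoeff_msupp -LTh mcoeffB mcoeffZ -[in ell@__]LTell.
    by rewrite -/(LC sigma h) -/(LC sigma ell) divzK // subrr eqxx.
  by rewrite -LTh -ltnS.
- rewrite /h' scalerBr scalerA -scaleNr.
  by apply: in_zspanD => //; apply: in_zspanZ.
Qed.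

End Saturation.

Lemma redp_eqZ_dvdz (p l : nat) (f g : {mpoly int[l]}) (beta : 'F_p) : prime p ->
  redp p f = beta *: redp p g -> forall m, (p%:Z %| (f - (beta : nat)%:Z *: g)@_m)%Z.
Proof.
move=> pp red_fg m; rewrite (dvdz_pcharf (pchar_Fp pp)) mcoeffB mcoeffZ intrB intrM.
have := congr1 (mcoeff m) red_fg; rewrite /redp mcoeffZ !mcoeff_map_mpoly => ->.
by rewrite [_%:~R]natr_Zp subrr.
Qed.

Lemma mpoly_dvdz_coeff {l} (z : int) (f : {mpoly int[l]}) :
  (forall m, (z %| f@_m)%Z) -> exists h, f = z *: h.
Proof.
move=> z_dvd; exists (\sum_(m <- msupp f) (f@_m %/ z)%Z *: 'X_[m]).
rewrite scaler_sumr {1}(mpolyE f); apply: eq_bigr => m _.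
by rewrite scalerA mulrC divzK.
Qed.

Theorem lemma6p1 (l n : nat) (alpha : 'I_n -> {mpoly int[l]})
  (sigma : termOrder l) (p : nat) (i j : 'I_n) :
  arrangement alpha -> prime p -> (i < j)%N ->
  (exists2 beta : 'F_p, beta != 0 & redp p (alpha i) = beta *: redp p (alpha j)) ->
  ~ lucky sigma p (in_ideal [:: alpha i; alpha j]).
Proof.
move=> [alpha_lin _ alpha_indep _] pp lt_ij [beta _ red_ij] [G [GB G_lucky]].
have la := (alpha_lin i).2; have lb := (alpha_lin j).2.
set c := (beta : nat)%:Z in red_ij *.
have [h Eh] := mpoly_dvdz_coeff (redp_eqZ_dvdz pp red_ij).
have p0 : p%:Z != 0 by rewrite eqz_nat -lt0n prime_gt0.
have lh : lin_form h.
  by apply: (lin_formZK p0); rewrite -Eh -scaleNr; apply: lin_formD; last apply: lin_formZ.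
have [x [y Eh_span]] : in_zspan (alpha i) (alpha j) h.
  by apply: (zspan_saturated pp la lb GB G_lucky lh); rewrite -Eh; exists 1, (- c); rewrite scale1r scaleNr.
have : (1 - p%:Z * x) *: alpha i = (c + p%:Z * y) *: alpha j.
  rewrite scalerBl scalerDl scale1r -!scalerA; apply/eqP.
  by rewrite subr_eq -addrA -scalerDr addrC [y *: _ + _]addrC -Eh_span -Eh subrK.
case/(alpha_indep i j); first by rewrite neq_ltn lt_ij.
move=> /eqP; rewrite subr_eq0 => /eqP px1 _.
have := dvdz_mulr x (dvdzz p%:Z); rewrite -px1 dvdzE /= dvdn1 => /eqP p1.
by rewrite p1 in pp.
Qed.
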